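(* Let $q$ be a prime power, let $r>0$ be an integer and $B(X)\in\mathbb{F}_{q^3}[X]$. Let $\Gamma$ be the set of roots in $\mathbb{F}_{q^3}$ of $X^{q^2}+X^q+X$ and $\Lambda$ the set of roots in $\mathbb{F}_{q^3}$ of $X^{q+1}+X+1$. Then the following are equivalent: (1) $X^rB(X^{q-1})$ permutes $\Gamma$; (2) $\gcd(r,q-1)=1$ and $X^rB(X)^{q-1}$ permutes $\Lambda$; (3) $\gcd(r,q-1)=1$, $B(X)$ has no roots in $\Lambda$, and the rational function $X^rB^{(q)}(-X^{-1}-1)/B(X)$ permutes $\Lambda$.
   Context: For a polynomial or rational function $g$ over $\overline{\mathbb{F}}_q$, $g^{(q)}$ denotes the function obtained from $g$ by raising each of its coefficients to the $q$-th power. A function ''permutes'' a set $T$ if it maps $T$ bijectively onto $T$. *)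

From HB Require Import structures.
From mathcomp Require Import all_boot all_order all_algebra all_field.
Set Implicit Arguments. Unset Strict Implicit. Unset Printing Implicit Defensive.
Import GRing.Theory.
Local Open Scope ring_scope.

Definition permutes (F : finType) (f : F -> F) (T : {set F}) : Prop :=
  f @: T = T /\ {in T &, injective f}.

Definition qpow_poly (F : fieldType) (q : nat) (g : {poly F}) : {poly F} :=
  map_poly (fun c => c ^+ q) g.

Definition Gamma_set (F : finFieldType) (q : nat) : {set F} :=
  [set x : F | x ^+ (q ^ 2) + x ^+ q + x == 0].

Definition Lambda_set (F : finFieldType) (q : nat) : {set F} :=
  [set x : F | x ^+ q.+1 + x + 1 == 0].

From HB Require Import structures.
From mathcomp Require Import all_boot all_order all_algebra all_field cyclic.
From mathcomp Require Import ring zify.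
Import GRing.Theory.
Local Open Scope ring_scope.
Set Implicit Arguments. Unset Strict Implicit. Unset Printing Implicit Defensive.

(* Write f, g, h for the maps in (1), (2), (3). As F^* is cyclic and every
   x in Lambda satisfies x^(q^2+q+1) = 1, the map x |-> x^(q-1) sends
   Gamma \ {0} onto Lambda, with fibres the cosets of the group mu of
   (q-1)-th roots of unity. It intertwines f with g, and f (z x) = z^r f x for
   z in mu; hence f permutes Gamma iff g permutes Lambda and z |-> z^r is
   injective on mu, i.e. gcd(r, q-1) = 1. Finally x^q = -1/x - 1 on Lambda, so
   B^(q)(-1/x - 1) = B(x)^q and h = g on Lambda once B has no zero there. *)

Section Permutes.
Variables (T : finType) (A : {set T}).

Lemma permutes_mem (f : T -> T) x : permutes f A -> x \in A -> f x \in A.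
Proof. by case=> fA _ xA; rewrite -fA imset_f. Qed.

Lemma permutes_surj (f : T -> T) y :
  permutes f A -> y \in A -> exists2 x, x \in A & f x = y.
Proof. by case=> fA _; rewrite -{1}fA => /imsetP[x xA ->]; exists x. Qed.

Lemma permutes_of_inj (f : T -> T) :
  {in A, forall x, f x \in A} -> {in A &, injective f} -> permutes f A.
Proof.
move=> fA f_inj; split=> //; apply/eqP; rewrite eqEcard card_in_imset // leqnn andbT.
by apply/subsetP=> _ /imsetP[x xA ->]; apply: fA.
Qed.

Lemma permutes_of_onto (f : T -> T) :
  {in A, forall x, f x \in A} -> {in A, forall y, exists2 x, x \in A & f x = y} ->
  permutes f A.
Proof.
move=> fA f_onto; have fAA : f @: A = A.
  apply/eqP; rewrite eqEsubset; apply/andP; split; apply/subsetP.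
    by move=> _ /imsetP[x xA ->]; apply: fA.
  by move=> y /f_onto[x xA <-]; apply: imset_f.
by split=> //; apply/imset_injP; rewrite fAA.
Qed.

Lemma eq_in_permutes (f g : T -> T) :
  {in A, f =1 g} -> permutes f A <-> permutes g A.
Proof.
have imp h k : {in A, h =1 k} -> permutes h A -> permutes k A.
  move=> hk [hA h_inj]; split; first by rewrite -(eq_in_imset hk).
  by move=> x y xA yA; rewrite -!hk //; apply: h_inj.
by move=> fg; split; apply: imp => // x xA; rewrite fg.
Qed.

End Permutes.

Lemma coprime_unity_root_eq1 (R : nzRingType) (r m : nat) (z : R) :
  (0 < m)%N -> coprime r m -> z ^+ r = 1 -> z ^+ m = 1 -> z = 1.
Proof.
move=> m_gt0 co zr zm; have [k z_prim k_dvd_m] := prim_order_exists m_gt0 zm.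
have : (k %| gcdn r m)%N by rewrite dvdn_gcd k_dvd_m (prim_order_dvd z_prim) zr eqxx.
by rewrite (eqP co) dvdn1 => /eqP k1; rewrite -[z]expr1 -k1 prim_expr_order.
Qed.

Lemma card_fixed_exprn_le (R : finIdomainType) (n : nat) :
  (1 < n)%N -> (#|[set b : R | b ^+ n == b]| <= n)%N.
Proof.
move=> n_gt1; have sizeP : size ('X^n - 'X : {poly R}) = n.+1.
  by rewrite size_polyDl ?size_polyXn // size_polyN size_polyX ltnS.
rewrite cardE -ltnS -sizeP max_poly_roots ?enum_uniq //.
  by rewrite -size_poly_eq0 sizeP.
by apply/allP=> b; rewrite mem_enum inE rootE !hornerE subr_eq0.
Qed.

Lemma horner_qpow_poly (F : fieldType) (q : nat) (B : {poly F}) (x : F) :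
  [pchar F].-nat q -> (qpow_poly q B).[x ^+ q] = B.[x] ^+ q.
Proof.
move=> qchar; have q_gt0 : (0 < q)%N by case/andP: qchar.
rewrite /qpow_poly (horner_coef_wide _ (size_poly _ _)) horner_coef.
have zero_q : (0 : F) ^+ q = 0 by rewrite expr0n gtn_eqF.
rewrite (big_morph _ (fun y z => exprDn_pchar y z qchar) zero_q).
by apply: eq_bigr => i _; rewrite coef_poly ltn_ord exprMn exprAC.
Qed.

Section FinFieldPowers.
Variable F : finFieldType.

Lemma expf_card_pred (x : F) : x != 0 -> x ^+ #|F|.-1 = 1.
Proof.
move=> x0; apply: (mulIf x0); rewrite mul1r -exprSr prednK ?expf_card //.
exact: ltn_trans (finNzRing_gt1 F).
Qed.

Lemma finField_prim_root_exists : exists w : F, #|F|.-1.-primitive_root w.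
Proof.
have /hasP[w _ w_prim] : has #|F|.-1.-primitive_root (enum [set~ (0 : F)]).
  apply: has_prim_root; rewrite ?enum_uniq -?cardE ?cardsC1 //.
    by rewrite -subn1 subn_gt0 finNzRing_gt1.
  by apply/allP=> x; rewrite mem_enum !inE unity_rootE => /expf_card_pred->.
by exists w.
Qed.

Lemma exists_unity_root_neq1 (d : nat) :
  (1 < d)%N -> (d %| #|F|.-1)%N -> exists2 z : F, z != 1 & z ^+ d = 1.
Proof.
move=> d_gt1 d_dvd; have [w w_prim] := finField_prim_root_exists.
have z_prim := dvdn_prim_root w_prim d_dvd.
exists (w ^+ (#|F|.-1 %/ d)); last exact: prim_expr_order z_prim.
apply: contraTneq d_gt1 => z1; move: (prim_order_dvd z_prim 1).
by rewrite z1 expr1 eqxx dvdn1 => /eqP->.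
Qed.

Lemma unity_root_expr_surj (m : nat) (x : F) :
  (m %| #|F|.-1)%N -> x ^+ (#|F|.-1 %/ m) = 1 -> exists y, y ^+ m = x.
Proof.
move=> m_dvd xm; have [w w_prim] := finField_prim_root_exists.
have [md_gt0 _] : (0 < #|F|.-1 %/ m)%N /\ (0 < m)%N.
  by apply/andP; rewrite -muln_gt0 divnK ?(prim_order_gt0 w_prim).
have xN : x ^+ #|F|.-1 = 1 by rewrite -(divnK m_dvd) exprM xm expr1n.
have [[i /= _] x_wi] := prim_rootP w_prim xN.
have : (#|F|.-1 %| i * (#|F|.-1 %/ m))%N.
  by rewrite (prim_order_dvd w_prim) exprM -x_wi xm.
rewrite -{1}(divnK m_dvd) mulnC dvdn_pmul2r // => m_dvd_i.
by exists (w ^+ (i %/ m)); rewrite -exprM divnK.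
Qed.

End FinFieldPowers.

Lemma sqrn_pred_succ (n : nat) : (0 < n)%N -> (n ^ 2 = (n.-1 * n.+1).+1)%N.
Proof. by case: n => // n _; rewrite expnS expn1 /=; lia. Qed.

Lemma predn_cube (n : nat) : ((n ^ 3).-1 = n.-1 * (n ^ 2 + n + 1))%N.
Proof. by case: n => // n; rewrite !expnS expn0 /=; nia. Qed.

Section LambdaGamma.
Variables (F : finFieldType) (q : nat).
Local Notation Lambda := (Lambda_set F q).
Local Notation Gamma := (Gamma_set F q).

Lemma Lambda_neq0 x : x \in Lambda -> x != 0.
Proof. by rewrite inE; apply: contraTneq => ->; rewrite expr0n !add0r oner_eq0. Qed.

Lemma Lambda_exprq x : x \in Lambda -> x ^+ q = - x^-1 - 1.
Proof.
move=> xL; have x0 := Lambda_neq0 xL.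
move: xL; rewrite inE exprSr -addrA addr_eq0 => /eqP e.
by apply: (mulIf x0); rewrite e; field.
Qed.

Lemma Gamma0 : (0 < q)%N -> 0 \in Gamma.
Proof. by move=> q_gt0; rewrite inE !expr0n expn_eq0 !gtn_eqF // !addr0. Qed.

Lemma GammaP x : (0 < q)%N -> x != 0 -> (x \in Gamma) = (x ^+ q.-1 \in Lambda).
Proof.
move=> q_gt0 x0; have xq : x ^+ q = x * x ^+ q.-1 by rewrite -exprS prednK.
have xq2 : x ^+ (q ^ 2) = x * (x ^+ q.-1) ^+ q.+1.
  by rewrite -exprM -exprS -sqrn_pred_succ.
by rewrite !inE xq xq2 -mulrDr -[x in _ + x]mulr1 -mulrDr mulf_eq0 (negbTE x0).
Qed.

Lemma Gamma_neq0E x :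
  (1 < q)%N -> (x \in Gamma) && (x != 0) = (x ^+ q.-1 \in Lambda).
Proof.
move=> q_gt1; have [->|x0] := eqVneq x 0; last by rewrite andbT GammaP // ltnW.
by rewrite andbF expr0n -subn1 subn_eq0 leqNgt q_gt1; apply/esym/negP => /Lambda_neq0/eqP.
Qed.

End LambdaGamma.

Section CubicExtension.
Variables (F : finFieldType) (q : nat).
Hypotheses (qchar : [pchar F].-nat q) (cardF : #|F| = (q ^ 3)%N).
Local Notation Lambda := (Lambda_set F q).
Local Notation Gamma := (Gamma_set F q).

Lemma gt1_q : (1 < q)%N.
Proof. by rewrite -(ltn_exp2r 1 q (isT : 0 < 3)%N) exp1n -cardF finNzRing_gt1. Qed.

Lemma Lambda_exprq_closed x : x \in Lambda -> x ^+ q \in Lambda.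
Proof.
rewrite !inE => /eqP xL.
have -> : (x ^+ q) ^+ q.+1 + x ^+ q + 1 = (x ^+ q.+1 + x + 1) ^+ q.
  by rewrite !exprDn_pchar // expr1n exprAC.
by rewrite xL expr0n gtn_eqF // ltnW // gt1_q.
Qed.

Lemma Lambda_unity_root x : x \in Lambda -> x ^+ (q ^ 2 + q + 1) = 1.
Proof.
move=> xL; have xqL := Lambda_exprq_closed xL.
have x0 := Lambda_neq0 xL; have xq0 := Lambda_neq0 xqL.
have xq2 : x ^+ (q ^ 2) = - (x ^+ q)^-1 - 1 by rewrite -mulnn exprM Lambda_exprq.
rewrite !exprD expr1 xq2 mulrBl mulNr mulVf // mul1r.
have -> : -1 - x ^+ q = x^-1 by rewrite Lambda_exprq //; ring.
by rewrite mulVf.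
Qed.

Lemma dvdn_pred_card : (q.-1 %| #|F|.-1)%N.
Proof. by rewrite cardF predn_cube dvdn_mulr. Qed.

Lemma Lambda_expr_surj x : x \in Lambda -> exists y, y ^+ q.-1 = x.
Proof.
move=> xL; have q1_gt0 : (0 < q.-1)%N by rewrite -subn1 subn_gt0 gt1_q.
apply: unity_root_expr_surj dvdn_pred_card _.
by rewrite cardF predn_cube mulKn // Lambda_unity_root.
Qed.

Lemma Gamma_neq0 : exists2 x, x \in Gamma & x != 0.
Proof.
have [x /andP[xG x0] | Gamma_eq0] := pickP [pred x | (x \in Gamma) && (x != 0)].
  by exists x.
(* Otherwise the trace of F over its subfield of order q would be injective. *)
pose tr x : F := x ^+ (q ^ 2) + x ^+ q + x.
have exprqq y : y ^+ (q ^ 2) = (y ^+ q) ^+ q by rewrite -exprM mulnn.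
have trB y z : tr (y - z) = tr y - tr z.
  by rewrite /tr !exprqq !exprDn_pchar // !exprNn_pchar //; ring.
have tr_inj : injective tr.
  move=> y z tr_yz; apply/eqP; rewrite -subr_eq0.
  apply: contraFT (Gamma_eq0 (y - z)) => yz0.
  by rewrite /= yz0 andbT inE -/(tr _) trB tr_yz subrr.
have tr_fixed y : tr y ^+ q = tr y.
  rewrite /tr !exprDn_pchar // -!exprqq -exprM -expnSr -cardF expf_card.
  by rewrite [RHS]addrC addrA.
have : (#|tr @: [set: F]| <= q)%N.
  apply: leq_trans (card_fixed_exprn_le F gt1_q); apply: subset_leq_card.
  by apply/subsetP=> _ /imsetP[y _ ->]; rewrite inE tr_fixed.
by rewrite card_imset // cardsT cardF leqNgt -{1}(expn1 q) ltn_exp2l ?gt1_q.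
Qed.

End CubicExtension.

Section PowerMaps.
Variables (F : finFieldType) (q r : nat) (B : {poly F}).
Hypotheses (q_gt1 : (1 < q)%N) (r_gt0 : (0 < r)%N).
Hypotheses (qchar : [pchar F].-nat q) (cardF : #|F| = (q ^ 3)%N).
Local Notation Lambda := (Lambda_set F q).
Local Notation Gamma := (Gamma_set F q).
Local Notation f x := (x ^+ r * B.[x ^+ q.-1]).
Local Notation g x := (x ^+ r * B.[x] ^+ q.-1).
Local Notation h x := (x ^+ r * (qpow_poly q B).[- x^-1 - 1] / B.[x]).

Let q_gt0 : (0 < q)%N := ltnW q_gt1.
Let q1_gt0 : (0 < q.-1)%N. Proof. by rewrite -subn1 subn_gt0. Qed.

Lemma f0 : f 0 = 0.
Proof. by rewrite expr0n gtn_eqF // mul0r. Qed.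

Lemma exprf_pred x : (f x) ^+ q.-1 = g (x ^+ q.-1).
Proof. by rewrite exprMn -!exprM mulnC. Qed.

Lemma f_unityM z x : z ^+ q.-1 = 1 -> f (z * x) = z ^+ r * f x.
Proof. by move=> zq; rewrite !exprMn zq mul1r mulrA. Qed.

Lemma permutes_Gamma_of_Lambda :
  coprime r q.-1 -> permutes (fun x => g x) Lambda -> permutes (fun x => f x) Gamma.
Proof.
move=> r_co gP.
have fG x : x \in Gamma -> x != 0 -> (f x \in Gamma) && (f x != 0).
  move=> xG x0; rewrite Gamma_neq0E // exprf_pred.
  by apply: permutes_mem gP _; rewrite -Gamma_neq0E // xG.
have f_eq0 x : x \in Gamma -> (f x == 0) = (x == 0).
  move=> xG; have [->|x0] := eqVneq x 0; first by rewrite f0 eqxx.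
  by have /andP[_ /negbTE] := fG x xG x0.
apply: permutes_of_inj => [x xG | x y xG yG /= fxy].
  by have [->|x0] := eqVneq x 0; [rewrite f0 Gamma0 | case/andP: (fG x xG x0)].
have [x0|x0] := eqVneq x 0.
  by move: (f_eq0 y yG); rewrite -fxy x0 f0 eqxx => /esym/eqP.
have y0 : y != 0 by rewrite -f_eq0 // -fxy f_eq0.
have xy : x ^+ q.-1 = y ^+ q.-1.
  case: gP => _ g_inj; apply: g_inj; rewrite -?Gamma_neq0E ?xG ?yG //.
  by rewrite -!exprf_pred fxy.
pose z := y / x.
have zq : z ^+ q.-1 = 1 by rewrite expr_div_n xy divff // expf_neq0.
have fx0 : f x != 0 by rewrite f_eq0.
have zr : z ^+ r = 1 by apply: (mulIf fx0); rewrite mul1r -f_unityM // divfK.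
by rewrite -[y](divfK x0) -/z (coprime_unity_root_eq1 q1_gt0 r_co zr zq) mul1r.
Qed.

Lemma permutes_f_eq0 :
  permutes (fun x => f x) Gamma -> {in Gamma, forall x, (f x == 0) = (x == 0)}.
Proof.
case=> _ f_inj x xG; apply/eqP/eqP=> [fx0|->]; last exact: f0.
by apply: f_inj; rewrite ?Gamma0 //= fx0 f0.
Qed.

Lemma coprime_of_permutes_Gamma : permutes (fun x => f x) Gamma -> coprime r q.-1.
Proof.
move=> fP; apply: contraT => r_nco.
have d_gt1 : (1 < gcdn r q.-1)%N by rewrite ltn_neqAle eq_sym r_nco gcdn_gt0 r_gt0.
have [z z1 zd] := exists_unity_root_neq1 d_gt1
  (dvdn_trans (dvdn_gcdr _ _) (dvdn_pred_card cardF)).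
have zq : z ^+ q.-1 = 1.
  by rewrite -(divnK (dvdn_gcdr r q.-1)) mulnC exprM zd expr1n.
have zr : z ^+ r = 1.
  by rewrite -(divnK (dvdn_gcdl r q.-1)) mulnC exprM zd expr1n.
have [x xG x0] := Gamma_neq0 qchar cardF.
have /andP[zxG _] : (z * x \in Gamma) && (z * x != 0).
  by rewrite Gamma_neq0E // exprMn zq mul1r -Gamma_neq0E // xG.
have : z * x = x by case: fP => _ f_inj; apply: f_inj; rewrite //= f_unityM // zr mul1r.
by rewrite -{2}[x]mul1r => /(mulIf x0)/eqP; rewrite (negbTE z1).
Qed.

Lemma permutes_Lambda_of_Gamma :
  permutes (fun x => f x) Gamma -> permutes (fun x => g x) Lambda.
Proof.
move=> fP; have f_eq0 := permutes_f_eq0 fP.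
apply: permutes_of_onto => x xL; have [y yx] := Lambda_expr_surj qchar cardF xL;
  move: xL; rewrite -{}yx -Gamma_neq0E // => /andP[yG y0].
  by rewrite /= -exprf_pred -Gamma_neq0E // (permutes_mem fP yG) (f_eq0 _ yG) y0.
have [u uG fu] := permutes_surj fP yG.
exists (u ^+ q.-1); last by rewrite /= -exprf_pred fu.
by rewrite -Gamma_neq0E // uG -(f_eq0 _ uG) fu.
Qed.

Lemma Lambda_horner_neq0 :
  permutes (fun x => g x) Lambda -> {in Lambda, forall x, B.[x] != 0}.
Proof.
move=> gP x xL; have := Lambda_neq0 (permutes_mem gP xL).
by apply: contraNneq => /= ->; rewrite expr0n gtn_eqF // mulr0.
Qed.

Lemma eq_in_h_g :
  {in Lambda, forall x, B.[x] != 0} -> {in Lambda, (fun x => h x) =1 (fun x => g x)}.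
Proof.
move=> B0 x xL /=; have Bq : B.[x] ^+ q = B.[x] ^+ q.-1 * B.[x].
  by rewrite -exprSr prednK.
by rewrite -(Lambda_exprq xL) horner_qpow_poly // Bq mulrA mulfK ?B0.
Qed.

End PowerMaps.

Unset Implicit Arguments.

Theorem lemma3p3 (q : nat)
  (hq : exists p k : nat, [/\ prime p, (0 < k)%N & q = (p ^ k)%N])
  (F : finFieldType) (hF : #|F| = (q ^ 3)%N)
  (r : nat) (hr : (0 < r)%N) (B : {poly F}) :
  [<-> permutes (fun x : F => x ^+ r * B.[x ^+ q.-1]) (Gamma_set F q);
       coprime r q.-1 /\
         permutes (fun x : F => x ^+ r * B.[x] ^+ q.-1) (Lambda_set F q);
       [/\ coprime r q.-1,
           (forall x, x \in Lambda_set F q -> B.[x] != 0) &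
           permutes (fun x : F =>
                       x ^+ r * (qpow_poly q B).[- x^-1 - 1] / B.[x])
                    (Lambda_set F q)]].
Proof.
have qchar : [pchar F].-nat q.
  have [p [k [p_prime _ q_pk]]] := hq.
  by rewrite q_pk pnatX (pnatE _ p_prime) (card_finPcharP (n := k * 3)) // hF q_pk expnM.
have q_gt1 := gt1_q hF.
tfae.
- move=> fP; split; first exact: coprime_of_permutes_Gamma q_gt1 hr qchar hF fP.
  exact: permutes_Lambda_of_Gamma q_gt1 hr qchar hF fP.
- case=> r_co gP; have B0 := Lambda_horner_neq0 q_gt1 gP.
  by split=> //; apply/(eq_in_permutes (eq_in_h_g r q_gt1 qchar B0)).
- case=> r_co B0 hP; apply: (permutes_Gamma_of_Lambda q_gt1 hr r_co).
  by apply/(eq_in_permutes (eq_in_h_g r q_gt1 qchar B0)).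
Qed.
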